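(* Let $a,b$ be distinct real numbers and $x_0\in\mathbb{R}$. Let $\mu_n:=2-1/2^{n+1}$ for $n\in\mathbb{N}$. Define the sequence $(\lambda_n)_{n\in\mathbb{N}}$ as the concatenation of the finite blocks $B_0,B_1,B_2,\dots$, where $B_m:=(\mu_0,\mu_1,\dots,\mu_{2m},1)$ (of length $2m+2$); i.e. \[ (\lambda_n)_{n\in\mathbb{N}}=(\mu_0,1,\mu_0,\mu_1,\mu_2,1,\mu_0,\mu_1,\mu_2,\mu_3,\mu_4,1,\dots). \] Define $(x_n)_{n\in\mathbb{N}}$ by \[ x_{2n+1}:=(1-\lambda_{2n})x_{2n}+\lambda_{2n}a,\qquad x_{2n+2}:=(1-\lambda_{2n+1})x_{2n+1}+\lambda_{2n+1}b . \] Then $x_{n(n+1)}=b$ for every $n\ge1$, $|x_{n(n+1)-1}|\to+\infty$, and hence $(x_n)_{n\in\mathbb{N}}$ is unbounded with $\liminf_n|x_n|<+\infty=\limsup_n|x_n|$. *)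

From HB Require Import structures.
From mathcomp Require Import all_boot all_order all_algebra.
From mathcomp Require Import all_classical all_reals all_analysis.
Set Implicit Arguments. Unset Strict Implicit. Unset Printing Implicit Defensive.
Import Order.TTheory GRing.Theory Num.Theory.
Local Open Scope ring_scope.

Definition mu {R : realType} (n : nat) : R := 2 - (2 ^+ n.+1)^-1.

Definition block {R : realType} (m : nat) : seq R :=
  rcons (mkseq (@mu R) (2 * m).+1) 1.

(* lambda = concatenation B_0 ++ B_1 ++ ... ; the first n+1 blocks already
   have length >= n+1, so the n-th entry is read off their concatenation. *)
Definition lam {R : realType} (n : nat) : R :=
  nth 0 (flatten (map (@block R) (iota 0 n.+1))) n.

Fixpoint xseq {R : realType} (a b x0 : R) (n : nat) : R :=
  match n with
  | 0 => x0
  | k.+1 => (1 - lam k) * xseq a b x0 k + lam k * (if odd k then b else a)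
  end.

(* Starting from
   x_(m(m+1)) = b, a pair of steps (over-relaxation by mu_(2k) ~ 2 towards a,
   then by mu_(2k+1) ~ 2 towards b) multiplies the distance to a by
   (mu_(2k) - 1)(mu_(2k+1) - 1) ~ 1 and adds mu_(2k+1)(b - a) ~ 2(b - a), so
   x_(m(m+1)+2m) - a grows linearly in m; since the defects 2 - mu_n = 2^-(n+1)
   decay geometrically, the growth rate stays at least 1/2.  The next step
   towards a keeps at least half of that distance, and the closing weight 1
   resets the sequence to b. *)
From HB Require Import structures.
From mathcomp Require Import all_boot all_order all_algebra.
From mathcomp Require Import all_classical all_reals all_analysis.
From mathcomp Require Import zify ring lra.
Import Order.TTheory GRing.Theory Num.Theory numFieldNormedType.Exports.
Local Open Scope classical_set_scope.
Local Open Scope ring_scope.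

Lemma odd_pronicD m j : odd (m * m.+1 + j) = odd j.
Proof. by rewrite oddD oddM /= andbN. Qed.

Lemma leq_pronic_pred n : (n <= (n * n.+1).-1)%N.
Proof. by case: n => // n; nia. Qed.

Lemma three_odd_le_exp2 k : (3 * (2 * k).+1 <= 2 ^ (2 * k).+2)%N.
Proof.
elim: k => // k IH.
have -> : (2 * k.+1).+2 = (2 * k).+4 by lia.
move: IH; rewrite !expnS; lia.
Qed.

Section frequently.
Context {R : realType}.
Local Open Scope ereal_scope.

Lemma limn_einf_le_frequently (u : (\bar R)^nat) (c : \bar R) :
  (forall n, exists2 k, (n <= k)%N & u k <= c) -> limn_einf u <= c.
Proof.
move=> freq; rewrite limn_einf_lim; apply: lime_le; first exact: is_cvg_einfs.
apply: nearW => n; have [k nk ukc] := freq n.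
by apply: le_trans ukc; apply: ereal_inf_lbound; exists k.
Qed.

Lemma limn_esup_frequently_gt (u : (\bar R)^nat) :
  (forall n (r : R), exists2 k, (n <= k)%N & r%:E < u k) -> limn_esup u = +oo.
Proof.
move=> freq; rewrite limn_esup_lim; apply/eqP; rewrite eq_le leey /=.
apply: lime_ge; first exact: is_cvg_esups.
apply: nearW => n; rewrite leye_eq; apply/eqP/eq_infty => r.
have [k nk /ltW rk] := freq n r.
by apply: le_trans rk _; apply: ereal_sup_ubound; exists k.
Qed.

End frequently.

Lemma frequently_gt_subseq_cvgy {R : realType} (u : R^nat) (phi : nat -> nat) :
  (forall n, (n <= phi n)%N) -> (u \o phi) @ \oo --> +oo ->
  forall n (r : R), exists2 k, (n <= k)%N & r < u k.
Proof.
move=> phi_ge /cvgry_gt uphi n r.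
have [m /= m_ge_n urm] : exists2 m, (n <= m)%N & r < u (phi m).
  have [N _ hN] := uphi r.
  by exists (maxn n N); [exact: leq_maxl | apply: hN; exact: leq_maxr].
by exists (phi m) => //; exact: leq_trans m_ge_n (phi_ge m).
Qed.

Lemma cvgy_affine_natr {R : realType} (c d : R) : 0 < c ->
  (c * n%:R - d) @[n --> \oo] --> +oo.
Proof.
move=> c_gt0; apply/cvgryPgt => A.
near=> n; rewrite ltrBrDr -ltr_pdivrMl //.
by near: n; apply: cvgry_gt; exact: cvgr_idn.
Unshelve. all: end_near. Qed.

Section lambda_blocks.
Context {R : realType}.

Lemma size_flatten_blocks m :
  size (flatten (map (@block R) (iota 0 m))) = (m * m.+1)%N.
Proof.
elim: m => // m IH.
rewrite -addn1 iotaD map_cat flatten_cat size_cat IH /= cats0 size_rcons.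
rewrite size_map size_iota; lia.
Qed.

Lemma lam_block m j : (j <= (2 * m).+1)%N ->
  @lam R (m * m.+1 + j) = nth 0 (block m) j.
Proof.
move=> hj; rewrite /lam.
have -> : (m * m.+1 + j).+1 = (m + (m * m.+1 + j - m).+1)%N by nia.
rewrite iotaD map_cat flatten_cat nth_cat size_flatten_blocks ltnNge leq_addr addKn [~~ _]/=.
rewrite add0n -[flatten _]/(block m ++ flatten (map block (iota m.+1 _))).
by rewrite nth_cat size_rcons size_mkseq ltnS hj.
Qed.

Lemma lam_block_mu m j : (j <= 2 * m)%N -> @lam R (m * m.+1 + j) = mu j.
Proof.
move=> hj; rewrite lam_block 1?ltnW// /block nth_rcons size_mkseq ltnS hj.
by rewrite nth_mkseq.
Qed.

Lemma lam_block_last m : @lam R (m * m.+1 + (2 * m).+1) = 1.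
Proof. by rewrite lam_block // /block nth_rcons size_mkseq ltnn eqxx. Qed.

Definition mu_gap n : R := (2 ^+ n.+1)^-1.

Lemma muE n : mu n = 2 - mu_gap n.
Proof. by []. Qed.

Lemma mu_gapS n : mu_gap n.+1 = mu_gap n / 2.
Proof. by rewrite /mu_gap exprS invfM mulrC. Qed.

Lemma mu_gap_gt0 n : 0 < mu_gap n.
Proof. by rewrite invr_gt0 exprn_gt0. Qed.

Lemma mu_gap_le_half n : mu_gap n <= 2^-1.
Proof.
rewrite lef_pV2 ?posrE ?exprn_gt0 // exprS ler_peMr // exprn_ege1 //; lra.
Qed.

Lemma mu_gap_even_le k : 3 * (2 * k%:R + 1) * mu_gap (2 * k) <= 2.
Proof.
rewrite ler_pdivrMr ?exprn_gt0 //.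
have := three_odd_le_exp2 k; rewrite -(ler_nat R) natrX natrM exprS.
by rewrite -[((2 * k).+1)%:R]natr1 natrM.
Qed.

Lemma mu_ge3half n : 3 / 2 <= mu n :> R.
Proof. by rewrite muE; have := mu_gap_le_half n; lra. Qed.

(* [gain k = (x_(m(m+1) + 2k) - a) / (b - a)] in every block [m >= 1]. *)
Fixpoint gain k : R :=
  if k is k.+1 then (1 - mu (2 * k)) * (1 - mu (2 * k).+1) * gain k + mu (2 * k).+1
  else 1.

Lemma gain_bounds k : 1 + k%:R / 2 <= gain k <= 2 * k%:R + 1.
Proof.
elim: k => [|k IH]; first by rewrite /= mulr0 mul0r addr0 add0r lexx.
rewrite /= !muE mu_gapS -natr1.
have := mu_gap_gt0 (2 * k); have := mu_gap_le_half (2 * k).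
have := mu_gap_even_le k; move: IH => /andP[].
set t := mu_gap _; set g := gain k => *.
apply/andP; split; nra.
Qed.

End lambda_blocks.

Section xseq_blocks.
Variables (R : realType) (a b x0 : R).
Local Notation x := (xseq a b x0).

Lemma xseqS n : x n.+1 = (1 - lam n) * x n + lam n * (if odd n then b else a).
Proof. by []. Qed.

Lemma xseq_block_start m : x (m.+1 * m.+2) = b.
Proof.
have -> : (m.+1 * m.+2 = (m * m.+1 + (2 * m).+1).+1)%N by nia.
rewrite xseqS lam_block_last odd_pronicD /= oddM /=.
by rewrite subrr mul0r add0r mul1r.
Qed.

Lemma xseq_block_stepA m k : (k <= m)%N ->
  x (m * m.+1 + 2 * k).+1 - a = (1 - mu (2 * k)) * (x (m * m.+1 + 2 * k) - a).
Proof.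
move=> km; rewrite xseqS lam_block_mu ?leq_mul2l // odd_pronicD oddM /=.
by ring.
Qed.

Lemma xseq_block_stepB m k : (k < m)%N ->
  x (m * m.+1 + (2 * k).+1).+1 - a =
  (1 - mu (2 * k).+1) * (x (m * m.+1 + (2 * k).+1) - a) + mu (2 * k).+1 * (b - a).
Proof.
move=> km; rewrite xseqS lam_block_mu; last by lia.
by rewrite odd_pronicD /= oddM /=; ring.
Qed.

Lemma xseq_block_gain m k : (1 <= m)%N -> (k <= m)%N ->
  x (m * m.+1 + 2 * k) - a = (b - a) * gain k.
Proof.
case: m => // m _; elim: k => [|k IH] km.
  by rewrite muln0 addn0 xseq_block_start mulr1.
have -> : (m.+1 * m.+2 + 2 * k.+1 = (m.+1 * m.+2 + (2 * k).+1).+1)%N by lia.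
rewrite xseq_block_stepB // addnS xseq_block_stepA 1?ltnW // IH 1?ltnW //=.
by ring.
Qed.

Lemma xseq_block_last m : (1 <= m)%N ->
  x (m.+1 * m.+2).-1 - a = (1 - mu (2 * m)) * ((b - a) * gain m).
Proof.
move=> m_ge1; have -> : ((m.+1 * m.+2).-1 = (m * m.+1 + 2 * m).+1)%N by nia.
by rewrite xseq_block_stepA // xseq_block_gain.
Qed.

Lemma xseq_block_last_ge m : (1 <= m)%N ->
  `|b - a| / 4 * m%:R - `|a| <= `|x (m.+1 * m.+2).-1|.
Proof.
move=> m_ge1; have := lerB_normD (x (m.+1 * m.+2).-1 - a) a.
rewrite subrK xseq_block_last // normrM.
have mu_ge := @mu_ge3half R (2 * m).
rewrite ler0_norm; last by lra.
have /andP[gain_ge _] := @gain_bounds R m.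
have gain_abs_ge : `|b - a| / 2 * m%:R <= `|(b - a) * gain m|.
  rewrite normrM (ger0_norm (x := gain m)); last by rewrite (le_trans _ gain_ge).
  by rewrite -mulrA ler_wpM2l //; lra.
have := normr_ge0 ((b - a) * gain m); nra.
Qed.

End xseq_blocks.

Theorem mainTheorem7 (R : realType) (a b x0 : R) (hab : a != b) :
  (forall n : nat, (1 <= n)%N -> xseq a b x0 (n * n.+1) = b) /\
  ((fun n : nat => `|xseq a b x0 (n * n.+1).-1|) @ \oo --> +oo) /\
  ~ (exists M : R, forall n : nat, `|xseq a b x0 n| <= M) /\
  (limn_einf (fun n : nat => (`|xseq a b x0 n|)%:E) < +oo)%E /\
  limn_esup (fun n : nat => (`|xseq a b x0 n|)%:E) = +oo%E.
Proof.
have dist_gt0 : 0 < `|b - a| / 4 by rewrite divr_gt0 // normr_gt0 subr_eq0 eq_sym.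
have diverge : (fun n => `|xseq a b x0 (n * n.+1).-1|) @ \oo --> +oo.
  rewrite -(@cvg_shiftS _ (fun n => `|xseq a b x0 (n * n.+1).-1|)).
  apply: ger_cvgy (cvgy_affine_natr _ `|a| dist_gt0).
  by exists 1%N => // m /= m_ge1; apply: xseq_block_last_ge.
have frequently_large :=
  frequently_gt_subseq_cvgy (fun k => `|xseq a b x0 k|) _ leq_pronic_pred diverge.
split; first by case=> // m _; apply: xseq_block_start.
split=> //; split.
  by move=> [M le_M]; have [k _] := frequently_large 0%N M; rewrite ltNge le_M.
split.
  apply: le_lt_trans (ltry `|b|); apply: limn_einf_le_frequently => n.
  by exists (n.+1 * n.+2)%N; [nia | rewrite xseq_block_start].
apply: limn_esup_frequently_gt => n r; have [k n_le_k r_lt] := frequently_large n r.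
by exists k; rewrite // lte_fin.
Qed.
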